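(* Let $K$ be a field of characteristic $\neq 2$ containing a square root $i$ of $-1$, and let $A\in K\setminus\{0\}$. For every integer $n\ge1$, $$\mathcal C_A(n)=\#\{T:\ T \text{ is on the } (\alpha,0)\text{-Euclid tree for some integer }\alpha\ge1,\ \max T=n\}+2,$$ and consequently $\mathcal C_A(n)=C_0(n)+1$.
   Context: Solutions are triples $(x,y,z)\in K[t]^3$ with $x^2+y^2+z^2=Axyz$; $\deg 0=-\infty$; the height is $h(x,y,z)=\max\{\deg x,\deg y,\deg z\}$; a Markoff triple is a solution with $h>0$ and $\deg x\le\deg y\le\deg z$; its signature is $S(x,y,z)=(\deg x,\deg y,\deg z)$. $\mathcal C_A(n)$ is the number of distinct signatures $S(P)$ of Markoff triples $P$ with $h(P)=n$. For integers $\alpha\ge1$ (more generally $\alpha\ge 0$) and $\beta\ge0$, define on triples of integers $\Gamma_{\beta,1}(\tau_1,\tau_2,\tau_3)=(\tau_2,\tau_3,\tau_2+\tau_3+\beta)$ and $\Gamma_{\beta,2}(\tau_1,\tau_2,\tau_3)=(\tau_1,\tau_3,\tau_1+\tau_3+\beta)$. The $(\alpha,\beta)$-Euclid tree is the set of triples obtained from the root $(\alpha,\alpha,2\alpha+\beta)$ by finitely many (possibly zero) applications of $\Gamma_{\beta,1},\Gamma_{\beta,2}$; ''$T$ is on the tree'' means $T$ belongs to this set, and $\max T$ is the largest entry of $T$. Triples are counted as distinct elements. For $\beta\ge0$ and $n\ge1$, $C_\beta(n)=\#\{T: T\text{ is on the }(\alpha,\beta)\text{-Euclid tree for some integer }\alpha\ge1,\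 \max T=n\}+1$. *)

From HB Require Import structures.
From mathcomp Require Import all_boot all_order all_algebra.
From Stdlib Require Import ClassicalEpsilon.
Set Implicit Arguments. Unset Strict Implicit. Unset Printing Implicit Defensive.
Import Order.TTheory GRing.Theory Num.Theory.
Local Open Scope ring_scope.

Definition asbool (P : Prop) : bool :=
  if excluded_middle_informative P then true else false.

(* Degrees are encoded by [size]: size p = deg p + 1, and size 0 = 0 encodes deg 0 = -oo.
   This encoding is strictly monotone, so comparisons and distinctness are preserved. *)

Definition markoff_sol (K : fieldType) (A : K) (x y z : {poly K}) : Prop :=
  x ^+ 2 + y ^+ 2 + z ^+ 2 = A%:P * x * y * z.

(* h(x,y,z) + 1 = max of the sizes (so h = n  <->  hsize = n.+1, for n >= 0). *)
Definition hsize (K : fieldType) (x y z : {poly K}) : nat :=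
  maxn (size x) (maxn (size y) (size z)).

Definition markoff_triple (K : fieldType) (A : K) (x y z : {poly K}) : Prop :=
  [/\ markoff_sol A x y z, (1 < hsize x y z)%N & (size x <= size y <= size z)%N].

Definition is_signature (K : fieldType) (A : K) (n : nat) (s : nat * nat * nat) : Prop :=
  exists x y z : {poly K}, [/\ markoff_triple A x y z, hsize x y z = n.+1 &
                               s = (size x, size y, size z)].

(* C_A(n): number of distinct signatures of Markoff triples of height n
   (all sizes are <= n+1, so the signatures live in 'I_(n+2)^3). *)
Definition CA (K : fieldType) (A : K) (n : nat) : nat :=
  #|[set s : 'I_n.+2 * 'I_n.+2 * 'I_n.+2 |
       asbool (is_signature A n (nat_of_ord s.1.1, nat_of_ord s.1.2, nat_of_ord s.2))]|.

Definition Gamma1 (beta : nat) (t : nat * nat * nat) : nat * nat * nat :=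
  let: (t1, t2, t3) := t in (t2, t3, t2 + t3 + beta)%N.
Definition Gamma2 (beta : nat) (t : nat * nat * nat) : nat * nat * nat :=
  let: (t1, t2, t3) := t in (t1, t3, t1 + t3 + beta)%N.

Inductive on_tree (alpha beta : nat) : nat * nat * nat -> Prop :=
| on_tree_root : on_tree alpha beta (alpha, alpha, 2 * alpha + beta)%N
| on_tree_G1 t : on_tree alpha beta t -> on_tree alpha beta (Gamma1 beta t)
| on_tree_G2 t : on_tree alpha beta t -> on_tree alpha beta (Gamma2 beta t).

Definition max3 (t : nat * nat * nat) : nat := maxn t.1.1 (maxn t.1.2 t.2).

(* #{T : T on the (alpha,beta)-Euclid tree for some alpha >= 1, max T = n}
   (entries are <= n, so T lives in 'I_(n+1)^3). *)
Definition tree_count (beta n : nat) : nat :=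
  #|[set t : 'I_n.+1 * 'I_n.+1 * 'I_n.+1 |
       let T := (nat_of_ord t.1.1, nat_of_ord t.1.2, nat_of_ord t.2) in
       asbool (exists alpha : nat, (1 <= alpha)%N /\ on_tree alpha beta T)
       && (max3 T == n)]|.

Definition Cbeta (beta n : nat) : nat := (tree_count beta n).+1.

(* Since the equation is monic quadratic in z, z and its Vieta partner A x y - z
   multiply to x^2 + y^2; comparing degrees shows that a Markoff triple with x = 0 has
   deg y = deg z, and one with x <> 0 has deg z = deg x + deg y. Conversely, every
   pattern (a, b, a + b) with 1 <= a <= b is realised, starting from
   (t^a, i t^a, A i t^(2a)) and running Euclid's algorithm backwards with Vieta flips,
   and so are (0, n, n) (with x = 2/A, which needs char K <> 2) and (-oo, n, n).
   The patterns of height n with deg x >= 1 are exactly the triples (p, q, p + q) of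
   the (alpha, 0)-Euclid trees (the one through (p, q, p + q) is rooted at gcd p q),
   and there are n/2 of them. *)

From HB Require Import structures.
From mathcomp Require Import all_boot all_order all_algebra.
From mathcomp Require Import ring zify.
From Stdlib Require Import ClassicalEpsilon.
Set Implicit Arguments. Unset Strict Implicit. Unset Printing Implicit Defensive.
Import Order.TTheory GRing.Theory Num.Theory.
Local Open Scope ring_scope.

Section MarkoffSolutions.
Variables (K : fieldType) (A : K).
Implicit Types x y z u : {poly K}.
Hypothesis A0 : A != 0.

Lemma markoff_solC x y z : markoff_sol A x y z -> markoff_sol A y x z.
Proof. by rewrite /markoff_sol => h; rewrite (addrC (y ^+ 2)) h; ring. Qed.

Lemma markoff_sol_swap23 x y z : markoff_sol A x y z -> markoff_sol A x z y.
Proof. by rewrite /markoff_sol => h; rewrite -addrA (addrC (z ^+ 2)) addrA h; ring. Qed.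

(* The equation is monic quadratic in z, with root sum A x y and root product x^2 + y^2. *)
Lemma mul_markoff_flip x y z :
  markoff_sol A x y z -> z * (A%:P * x * y - z) = x ^+ 2 + y ^+ 2.
Proof.
rewrite /markoff_sol => h; apply/eqP; rewrite -subr_eq0.
have -> : z * (A%:P * x * y - z) - (x ^+ 2 + y ^+ 2)
        = A%:P * x * y * z - (x ^+ 2 + y ^+ 2 + z ^+ 2) by ring.
by rewrite h subrr.
Qed.

Lemma markoff_sol_flip x y z :
  markoff_sol A x y z -> markoff_sol A x y (A%:P * x * y - z).
Proof.
move=> /mul_markoff_flip h; rewrite /markoff_sol.
have -> : x ^+ 2 + y ^+ 2 = (A%:P * x * y - z) * z by rewrite mulrC h.
ring.
Qed.

Lemma size_sqr u : size (u ^+ 2) = (size u).*2.-1.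
Proof.
have [->|u0] := eqVneq u 0; first by rewrite expr0n size_poly0.
by rewrite expr2 size_mul // addnn.
Qed.

Lemma size_scaled_mul x y : x != 0 -> y != 0 ->
  size (A%:P * x * y) = (size x + size y).-1.
Proof. by move=> x0 y0; rewrite -mulrA size_Cmul // size_mul. Qed.

Lemma size_markoff_flip x y z : x != 0 -> y != 0 ->
  (size z < (size x + size y).-1)%N ->
  size (A%:P * x * y - z) = (size x + size y).-1.
Proof.
move=> x0 y0 hz.
by rewrite size_polyDl size_scaled_mul // size_polyN.
Qed.

Lemma markoff_sol0_size y z : markoff_sol A 0 y z -> size y = size z.
Proof.
rewrite /markoff_sol mulr0 !mul0r expr0n add0r => /eqP.
rewrite addr_eq0 => /eqP yz.
by have := congr1 (fun p : {poly K} => size p) yz; rewrite size_polyN !size_sqr; lia.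
Qed.

Lemma markoff_sizes x y z : markoff_sol A x y z ->
  (1 < size z)%N -> (size x <= size y <= size z)%N ->
  (x = 0 /\ size y = size z) \/ (x != 0 /\ size z = (size x + size y).-1).
Proof.
move=> sol z1 /andP[xy yz].
have [x0|x0] := eqVneq x 0.
  by left; split; last by apply: markoff_sol0_size; rewrite -x0.
right; split => //.
have sx0 : (0 < size x)%N by rewrite size_poly_gt0.
have y0 : y != 0 by rewrite -size_poly_gt0; lia.
have z0 : z != 0 by rewrite -size_poly_gt0; lia.
set w := A%:P * x * y - z.
have sP := size_scaled_mul x0 y0.
have sxy2 : (size (z * w)%R <= (size y).*2.-1)%N.
  rewrite mul_markoff_flip //; apply: leq_trans (size_polyD _ _) _.
  by rewrite !size_sqr; lia.
(* If deg z <> deg (A x y), then deg (z w) = deg z + max (deg z) (deg (A x y)) exceeds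
   deg (x^2 + y^2) <= 2 deg y. *)
have [lt|gt|//] := ltngtP (size z) (size x + size y).-1.
- have sw : size w = (size x + size y).-1 by rewrite size_markoff_flip.
  have w0 : w != 0 by rewrite -size_poly_gt0 sw; lia.
  have szw : size (z * w) = (size z + size w).-1 := size_mul z0 w0.
  by move: sxy2; rewrite szw sw; lia.
- have sw : size w = size z by rewrite /w addrC size_polyDl ?size_polyN ?sP.
  have w0 : w != 0 by rewrite -size_poly_gt0 sw; lia.
  have szw : size (z * w) = (size z + size w).-1 := size_mul z0 w0.
  by move: sxy2; rewrite szw sw; lia.
Qed.

Variable i : K.
Hypothesis i2 : i ^+ 2 = -1.

Lemma i_neq0 : i != 0.
Proof. by apply: contra_eq_neq i2 => ->; rewrite expr0n eq_sym oppr_eq0 oner_eq0. Qed.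

Lemma sqr_add_isqr u : u ^+ 2 + (i%:P * u) ^+ 2 = 0.
Proof. by rewrite exprMn -polyC_exp i2 polyCN mulN1r subrr. Qed.

Lemma markoff_sol_isotropic u : markoff_sol A u (i%:P * u) (A%:P * u * (i%:P * u)).
Proof. by rewrite /markoff_sol sqr_add_isqr add0r expr2. Qed.

Lemma markoff_sol_zero u : markoff_sol A 0 (i%:P * u) u.
Proof. by rewrite /markoff_sol expr0n add0r addrC sqr_add_isqr mulr0 !mul0r. Qed.

Lemma markoff_sol_const c u : A * c = 2%:R ->
  markoff_sol A c%:P (u + i%:P * c%:P) u.
Proof.
move=> Ac; rewrite /markoff_sol -(polyCM A c) Ac polyC_natr.
have -> : c%:P ^+ 2 + (u + i%:P * c%:P) ^+ 2 + u ^+ 2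
        = (c%:P ^+ 2 + (i%:P * c%:P) ^+ 2) + 2%:R * (u + i%:P * c%:P) * u by ring.
by rewrite sqr_add_isqr add0r.
Qed.

Lemma exists_markoff_sizes a b : (0 < a)%N -> (0 < b)%N ->
  exists x y z, markoff_sol A x y z /\ (size x, size y, size z) = (a.+1, b.+1, (a + b).+1)%N.
Proof.
have [k] := ubnP (a + b); elim: k a b => [|k IH] a b // ab a0 b0.
wlog le_ab : a b ab a0 b0 / (a <= b)%N.
  move=> hwlog; have [|lt_ba] := leqP a b; first exact: hwlog.
  have [x [y [z [sol [sx sy sz]]]]] := hwlog b a ltac:(lia) b0 a0 (ltnW lt_ba).
  by exists y, x, z; split; [exact: markoff_solC | rewrite sx sy sz addnC].
move: le_ab; rewrite leq_eqVlt => /predU1P[<- | lt_ab].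
  have X0 : 'X^a != 0 :> {poly K} by rewrite -size_poly_gt0 size_polyXn.
  have iX0 : i%:P * 'X^a != 0 by rewrite mulf_neq0 ?polyC_eq0 ?i_neq0.
  exists 'X^a, (i%:P * 'X^a), (A%:P * 'X^a * (i%:P * 'X^a)).
  split; first exact: markoff_sol_isotropic.
  by rewrite size_scaled_mul // size_Cmul ?i_neq0 // size_polyXn addnS.
have [x [y [z [sol [sx sy sz]]]]] := IH a (b - a)%N ltac:(lia) a0 ltac:(lia).
have x0 : x != 0 by rewrite -size_poly_gt0 sx.
have z0 : z != 0 by rewrite -size_poly_gt0 sz.
exists x, z, (A%:P * x * z - y); split; first exact/markoff_sol_flip/markoff_sol_swap23.
rewrite size_markoff_flip // ?sx ?sy ?sz; first by congr (_, _, _); lia.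
lia.
Qed.

End MarkoffSolutions.

Definition splits (m c : nat) : seq (nat * nat * nat) :=
  [seq (p, m - p, c) | p <- iota 1 m./2]%N.

Lemma mem_splits m c t : (t \in splits m c) =
  [&& 0 < t.1.1, t.1.1 <= t.1.2, t.1.1 + t.1.2 == m & t.2 == c]%N.
Proof.
case: t => [[p q] d] /=; apply/mapP/idP => [[k] | /and4P[p0 pq /eqP pqm /eqP ->]].
  by rewrite mem_iota => /andP[k0 km] [-> -> ->]; apply/and4P; split; try apply/eqP; lia.
by exists p; [rewrite mem_iota; lia | congr (_, _, _); lia].
Qed.

Lemma size_splits m c : size (splits m c) = m./2.
Proof. by rewrite size_map size_iota. Qed.

Lemma splits_uniq m c : uniq (splits m c).
Proof. by rewrite map_inj_uniq ?iota_uniq // => p q []. Qed.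

Section Signatures.
Variables (K : fieldType) (A i : K).
Hypotheses (A0 : A != 0) (i2 : i ^+ 2 = -1) (two_neq0 : 2%:R != 0 :> K).

Lemma markoff_signature n (x y z : {poly K}) : (0 < n)%N -> markoff_sol A x y z ->
  (size x <= size y <= size z)%N -> size z = n.+1 ->
  is_signature A n (size x, size y, size z).
Proof.
move=> n0 sol xyz sz; have [xy yz] := andP xyz.
have hs : hsize x y z = n.+1 by rewrite /hsize sz; lia.
by exists x, y, z; split => //; split; rewrite ?hs.
Qed.

Lemma is_signatureP n t : (0 < n)%N ->
  is_signature A n t <-> t \in (0, n.+1, n.+1)%N :: splits n.+2 n.+1.
Proof.
(* In sizes, (0, n+1, n+1) is the signature with x = 0. *)
move=> n0; rewrite inE mem_splits; split.
  case=> x [y [z [[sol _ xyz] hs ->]]]; have [xy yz] := andP xyz.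
  have sz : size z = n.+1 by move: hs; rewrite /hsize; lia.
  have [[-> syz]|[x0 szxy]] := markoff_sizes A0 sol ltac:(lia) xyz.
    by rewrite size_poly0 syz sz eqxx.
  have sx0 : (0 < size x)%N by rewrite size_poly_gt0.
  have sxy : (size x + size y)%N = n.+2 by lia.
  by rewrite /= sx0 xy sxy sz !eqxx orbT.
case: t => [[a b] d] /orP[/eqP[-> -> ->] | /and4P[/= a0 ab /eqP sab /eqP ->]].
  have := markoff_signature n0 (markoff_sol_zero A i2 'X^n).
  by rewrite size_poly0 size_Cmul ?(i_neq0 i2) // size_polyXn; apply; rewrite ?leqnn.
have [a1 | a2] := eqVneq a 1%N.
  have Ac : A * (2%:R / A) = 2%:R by rewrite mulrC divfK.
  have sc : size (2%:R / A)%:P = 1%N by rewrite size_polyC mulf_neq0 ?invr_eq0.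
  have sy : size ('X^n + i%:P * (2%:R / A)%:P) = n.+1.
    rewrite size_polyDl size_polyXn // -polyCM.
    by apply: leq_ltn_trans (size_polyC_leq1 _) _.
  have := markoff_signature n0 (markoff_sol_const i2 'X^n Ac).
  have -> : b = n.+1 by lia.
  by rewrite sc sy size_polyXn a1; apply; rewrite ?leqnn.
have [x [y [z [sol [sx sy sz]]]]] := exists_markoff_sizes A0 i2 (a:=a.-1) (b:=b.-1)
  ltac:(lia) ltac:(lia).
have := markoff_signature n0 sol; rewrite sx sy sz.
have [-> -> ->] : [/\ a.-1.+1 = a, b.-1.+1 = b & (a.-1 + b.-1).+1 = n.+1] by split; lia.
by apply; lia.
Qed.

End Signatures.

Lemma on_tree0_sum alpha t : (0 < alpha)%N -> on_tree alpha 0 t ->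
  [&& 0 < t.1.1, t.1.1 <= t.1.2 & t.2 == t.1.1 + t.1.2]%N.
Proof.
move=> a0; elim=> [|[[p q] r] _ /and3P[/= p0 pq /eqP ->]|[[p q] r] _ /and3P[/= p0 pq /eqP ->]] /=;
  by apply/and3P; split; try apply/eqP; lia.
Qed.

Lemma on_tree_gcdn p q : (0 < p <= q)%N -> on_tree (gcdn p q) 0 (p, q, p + q)%N.
Proof.
move=> /andP[p0 /subnKC <-]; move: (q - p)%N => r {q}.
have [k] := ubnP (p + r); elim: k p r p0 => [|k IH] p r // p0 pr.
have [->|r0] := posnP r.
  by rewrite addn0 gcdnn -(addn0 (p + p)%N) addnn -mul2n; apply: on_tree_root.
rewrite gcdnDl; have [rp|pr'] := leqP r p.
  have := on_tree_G1 (IH r (p - r)%N r0 ltac:(lia)).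
  by rewrite subnKC // gcdnC /= addn0 (addnC r).
have := on_tree_G2 (IH p (r - p)%N p0 ltac:(lia)).
by rewrite subnKC ?(ltnW pr') //= addn0.
Qed.

Lemma on_tree0P t : (exists alpha, (1 <= alpha)%N /\ on_tree alpha 0 t) <->
  [&& 0 < t.1.1, t.1.1 <= t.1.2 & t.2 == t.1.1 + t.1.2]%N.
Proof.
split => [[alpha [a0 /(on_tree0_sum a0)]] // |].
case: t => [[p q] r] /and3P[/= p0 pq /eqP ->].
exists (gcdn p q); split; last exact/on_tree_gcdn/andP.
by rewrite gcdn_gt0 p0.
Qed.

Lemma asboolP (P : Prop) : reflect P (asbool P).
Proof. by rewrite /asbool; case: excluded_middle_informative => h; constructor. Qed.

Definition ord3 {N} (s : 'I_N * 'I_N * 'I_N) : nat * nat * nat :=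
  (nat_of_ord s.1.1, nat_of_ord s.1.2, nat_of_ord s.2).

Lemma card_ord3_set N (P : pred (nat * nat * nat)) (l : seq (nat * nat * nat)) :
  uniq l -> (forall t : nat * nat * nat, t \in l -> max3 t <= N)%N ->
  (forall s : 'I_N.+1 * 'I_N.+1 * 'I_N.+1, P (ord3 s) = (ord3 s \in l)) ->
  #|[set s : 'I_N.+1 * 'I_N.+1 * 'I_N.+1 | P (ord3 s)]| = size l.
Proof.
move=> ul lN Pl.
pose g t : 'I_N.+1 * 'I_N.+1 * 'I_N.+1 := (inord t.1.1, inord t.1.2, inord t.2).
have ord3K s : g (ord3 s) = s by case: s => [[? ?] ?]; rewrite /g /= !inord_val.
have gK : {in l, cancel g ord3}.
  move=> [[p q] r] /lN; rewrite /max3 /= => le_N.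
  have [hp hq hr] : [/\ p < N.+1, q < N.+1 & r < N.+1]%N by split; lia.
  by rewrite /ord3 /= !inordK.
transitivity #|[set s in map g l]|.
  apply: eq_card => s; rewrite !inE Pl; apply/idP/mapP => [sl | [t tl ->]].
    by exists (ord3 s); rewrite ?ord3K.
  by rewrite gK.
rewrite cardsE -(size_map g); apply/card_uniqP.
by rewrite map_inj_in_uniq //; apply: can_in_inj gK.
Qed.

Lemma tree_count0_eq n : tree_count 0 n = n./2.
Proof.
rewrite /tree_count -(size_splits n n).
apply: (card_ord3_set (P := fun t =>
  asbool (exists alpha, (1 <= alpha)%N /\ on_tree alpha 0 t) && (max3 t == n)));
  first exact: splits_uniq.
  by move=> [[p q] r]; rewrite mem_splits /max3 /= => /and4P[_ _ /eqP pqn /eqP ->]; lia.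
move=> s; rewrite mem_splits; case: (ord3 s) => [[p q] r] /=.
apply/andP/and4P => [[/asboolP/on_tree0P/and3P[/= p0 pq /eqP ->]] | ].
  by rewrite /max3 /= => /eqP <-; split; try apply/eqP; lia.
move=> [p0 pq /eqP pqn /eqP ->]; split.
  by apply/asboolP; apply/on_tree0P; rewrite /= p0 pq pqn eqxx.
by rewrite /max3 /=; apply/eqP; lia.
Qed.

Lemma CA_eq (K : fieldType) (A i : K) n : A != 0 -> i ^+ 2 = -1 -> 2%:R != 0 :> K ->
  (0 < n)%N -> CA A n = (n./2).+2.
Proof.
move=> A0 i2 two0 n0; rewrite /CA.
have -> : (n./2).+2 = (size (splits n.+2 n.+1)).+1 by rewrite size_splits.
apply: (card_ord3_set (P := fun t => asbool (is_signature A n t))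
                      (l := (0, n.+1, n.+1)%N :: splits n.+2 n.+1)).
- by rewrite cons_uniq splits_uniq mem_splits.
- move=> [[a b] c]; rewrite inE mem_splits /max3 /= => /orP[/eqP[-> -> ->] | /and4P[a0 le_ab /eqP ab /eqP ->]]; lia.
- by move=> s; apply/asboolP/idP => /(is_signatureP A0 i2 two0 _ n0).
Qed.

Theorem lemma3p1 (K : fieldType) (A : K) :
  ~~ (2%N \in [pchar K]) ->
  (exists i : K, i ^+ 2 = -1) ->
  A != 0 ->
  forall n : nat, (1 <= n)%N ->
    CA A n = (tree_count 0 n + 2)%N /\ CA A n = (Cbeta 0 n + 1)%N.
Proof.
move=> char2 [i i2] A0 n n0.
have two0 : 2%:R != 0 :> K by move: char2; rewrite inE.
by rewrite /Cbeta (CA_eq A0 i2 two0 n0) tree_count0_eq addn2 addn1.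
Qed.
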